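(* Let $\omega\in L^1[0,1]$ be real-valued with $\omega\ge 0$ a.e. on $[0,1]$ and $\int_0^1\omega(x)\,dx>0$. Fix $c_1\ge 0$ and $c_2\in\mathbb{R}$, not both zero. For each $\lambda\ge 0$ let $\theta(\cdot;\lambda)$ be the absolutely continuous solution on $[0,1]$ of $$\theta'(x;\lambda)=\sqrt{\lambda}\big(\cos^2\theta(x;\lambda)+\omega(x)\sin^2\theta(x;\lambda)\big)\quad\text{a.e. on }[0,1],$$ with initial value $\theta(0;\lambda)=\arctan\frac{\sqrt{\lambda}c_1}{c_2}\in[0,\pi)$. Then $\lim_{\lambda\to+\infty}\theta(1;\lambda)=+\infty$, and for every fixed $\lambda\ge 0$ the function $x\mapsto\theta(x;\lambda)$ is nondecreasing on $[0,1]$.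
   Context: Here $\theta(0;\lambda)$ is the angle in $[0,\pi)$ whose tangent is $\sqrt{\lambda}c_1/c_2$ (equal to $\pi/2$ when $c_2=0$); $\theta$ is the (elliptic) Prüfer angle of the solution of $-y''=\lambda\omega y$, $y(0)=c_1$, $y'(0)=c_2$. *)

From HB Require Import structures.
From mathcomp Require Import all_boot all_order all_algebra.
From mathcomp Require Import all_classical all_reals all_analysis.
Set Implicit Arguments. Unset Strict Implicit. Unset Printing Implicit Defensive.
Import Order.TTheory GRing.Theory Num.Theory.
Import numFieldNormedType.Exports.
Local Open Scope classical_set_scope.
Local Open Scope ring_scope.

Definition abs_cont_on (R : realType) (a b : R) (f : R -> R) : Prop :=
  forall e : R, 0 < e -> exists2 d : R, 0 < d &
    forall (n : nat) (u v : nat -> R),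
      (forall i, (i < n)%N -> a <= u i /\ u i <= v i /\ v i <= b) ->
      (forall i j, (i < j)%N -> (j < n)%N -> v i <= u j) ->
      \sum_(i < n) (v i - u i) < d ->
      \sum_(i < n) `|f (v i) - f (u i)| < e.

Definition theta0 (R : realType) (c1 c2 lam : R) : R :=
  if c2 == 0 then pi / 2
  else let a := atan (Num.sqrt lam * c1 / c2) in
       if a < 0 then a + pi else a.

(* The Pruefer angle satisfies theta' = sqrt(lambda) (cos^2 theta + omega sin^2 theta) >= 0
   almost everywhere, and an absolutely continuous function with an a.e. nonnegative
   derivative is nondecreasing.  The latter is proved by real induction: given e > 0, cover
   the exceptional null set by an open set U of measure smaller than the modulus of absolute
   continuity for e; outside U the derivative limits the local decrease to e times the
   length, while the pieces inside U have total variation below e.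
   Since cos^2 + omega sin^2 >= min(1, omega) when omega >= 0, the same argument applied to
   theta - sqrt(lambda) G, with G a primitive of c(x) = min(1, max(0, omega x)), gives
   theta(1; lambda) >= theta(0; lambda) + sqrt(lambda) int_0^1 c.  The integral of c is
   positive because omega >= 0 has positive integral, and theta(0; lambda) >= 0, so
   theta(1; lambda) tends to +oo. *)

From HB Require Import structures.
From mathcomp Require Import all_boot all_order all_algebra.
From mathcomp Require Import all_classical all_reals all_analysis.
From mathcomp Require Import measurable_realfun ring lra.
Import Order.TTheory GRing.Theory Num.Theory.
Import numFieldNormedType.Exports.
Local Open Scope classical_set_scope.
Local Open Scope ring_scope.

Set Implicit Arguments.
Unset Strict Implicit.
Unset Printing Implicit Defensive.

Section absolute_continuity.
Context {R : realType}.
Implicit Types (a b k : R) (f g : R -> R).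

Lemma abs_cont_onB a b f g :
  abs_cont_on a b f -> abs_cont_on a b g -> abs_cont_on a b (f \- g).
Proof.
move=> acf acg e e0.
have e20 : 0 < e / 2 by rewrite divr_gt0.
have [df df0 Hf] := acf _ e20; have [dg dg0 Hg] := acg _ e20.
exists (Num.min df dg) => [|n u v uvab uv_sorted]; first by rewrite lt_min df0 dg0.
rewrite lt_min => /andP[/(Hf n u v uvab uv_sorted) sf /(Hg n u v uvab uv_sorted) sg].
apply: (@le_lt_trans _ _ (\sum_(i < n) (`|f (v i) - f (u i)| + `|g (v i) - g (u i)|))).
  apply: ler_sum => i _.
  have -> : (f \- g) (v i) - (f \- g) (u i) = f (v i) - f (u i) - (g (v i) - g (u i)).
    by rewrite /=; ring.
  exact: ler_normB.
by rewrite big_split /= [e]splitr ltrD.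
Qed.

Lemma lipschitz_abs_cont_on a b k f :
  (forall u v, a <= u -> u <= v -> v <= b -> `|f v - f u| <= k * (v - u)) ->
  abs_cont_on a b f.
Proof.
move=> lip e e0; have k10 : 0 < `|k| + 1 by rewrite ltr_wpDl.
exists (e / (`|k| + 1)) => [|n u v uvab _ small]; first by rewrite divr_gt0.
apply: (@le_lt_trans _ _ (`|k| * \sum_(i < n) (v i - u i))).
  rewrite mulr_sumr; apply: ler_sum => i _.
  have [au [uv vb]] := uvab i (ltn_ord i).
  by apply: le_trans (lip _ _ au uv vb) _; rewrite ler_wpM2r ?subr_ge0 ?ler_norm.
have sum0 : 0 <= \sum_(i < n) (v i - u i).
  by apply: sumr_ge0 => i _; have [_ [uv _]] := uvab i (ltn_ord i); rewrite subr_ge0.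
apply: (@le_lt_trans _ _ ((`|k| + 1) * \sum_(i < n) (v i - u i))).
  by rewrite ler_wpM2r // lerDl.
by rewrite mulrC -ltr_pdivlMr.
Qed.

End absolute_continuity.

Section lebesgue_measure_of_intervals.
Context {R : realType}.
Local Notation mu := (@lebesgue_measure R).

Lemma lebesgue_measure_itv_oc (u v : R) : u <= v -> mu `]u, v] = (v - u)%:E.
Proof.
rewrite le_eqVlt => /predU1P[<-|uv]; last by rewrite lebesgue_measure_itv /= lte_fin uv EFinB.
by rewrite subrr set_itvoc0 measure0.
Qed.

Lemma sum_itv_length_le_measure (U : set R) (n : nat) (u v : nat -> R) :
  measurable U -> (forall i, (i < n)%N -> u i <= v i) ->
  (forall i j, (i < j)%N -> (j < n)%N -> v i <= u j) ->
  (forall i, (i < n)%N -> `]u i, v i] `<=` U) ->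
  ((\sum_(i < n) (v i - u i))%:E <= mu U)%E.
Proof.
move=> mU uv sorted sub.
pose F k : set R := if (k < n)%N then [set` `]u k, v k]] else set0.
have trivF : trivIset setT F.
  apply: ltn_trivIset => k j jk; rewrite /F.
  case: (ltnP k n) => kn; last by rewrite setI0.
  rewrite (ltn_trans jk kn); apply/seteqP; split => // x [/=].
  rewrite !in_itv /= => /andP[_ xv] /andP[ux _].
  by have := lt_le_trans ux (le_trans xv (sorted _ _ jk kn)); rewrite ltxx.
rewrite -sumEFin (eq_bigr (fun i : 'I_n => mu (F i))) => [|i _]; last first.
  by rewrite /F ltn_ord lebesgue_measure_itv_oc // uv.
rewrite -measure_bigsetU //; last by move=> k; rewrite /F; case: ifP.
apply: le_measure; rewrite ?inE //.
  by apply: bigsetU_measurable => k _; rewrite /F; case: ifP.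
by rewrite -bigcup_mkord; apply: bigcup_sub => k /= kn; rewrite /F kn; exact: sub.
Qed.

End lebesgue_measure_of_intervals.

Lemma straddle_derive1_ge0 {R : realType} (f : R -> R) (t e : R) :
  derivable f t 1 -> 0 <= derive1 f t -> 0 < e ->
  exists2 r : R, 0 < r & forall u v, u <= t -> t <= v -> t - u < r -> v - t < r ->
    - (e * (v - u)) <= f v - f u.
Proof.
move=> df f'0 e0.
have /(_ _ (- e)) := @cvgr_gt _ _ _ _ _ _ df.
rewrite -/(derive f t 1) -derive1E => /(_ (lt_le_trans _ f'0)).
rewrite oppr_lt0 => /(_ e0) [r /= r0 near_t].
have slope h : `|h| < r -> h != 0 -> - e < h^-1 * (f (h + t) - f t).
  move=> hr h0; have := near_t h; rewrite /ball_ /= sub0r normrN => /(_ hr h0).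
  by rewrite /GRing.scale /= mulr1.
have right v : t <= v -> v - t < r -> - (e * (v - t)) <= f v - f t.
  rewrite le_eqVlt => /predU1P[<-|tv] vr; first by rewrite !subrr mulr0 oppr0.
  have vt0 : 0 < v - t by rewrite subr_gt0.
  have := slope (v - t); rewrite gtr0_norm // subrK gt_eqF // => /(_ vr isT).
  by rewrite -(ltr_pM2l vt0) mulrA mulfV ?gt_eqF // mul1r mulrN mulrC => /ltW.
have left u : u <= t -> t - u < r -> - (e * (t - u)) <= f t - f u.
  rewrite le_eqVlt => /predU1P[->|ut] ur; first by rewrite !subrr mulr0 oppr0.
  have tu0 : 0 < t - u by rewrite subr_gt0.
  have := slope (u - t); rewrite distrC gtr0_norm // subrK lt_eqF ?subr_lt0 //.
  move=> /(_ ur isT); rewrite -opprB invrN mulNr ltrNr opprK.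
  by rewrite -(ltr_pM2l tu0) mulrA mulfV ?gt_eqF // mul1r lerNl opprB mulrC => /ltW.
exists r => // u v ut tv ur vr; have := lerD (right v tv vr) (left u ut ur).
by rewrite -opprD -mulrDr addrA subrK addrA subrK.
Qed.

Lemma real_induction {R : realType} (P : R -> Prop) (x y : R) :
  x <= y -> P x ->
  (forall m, x <= m -> m <= y -> exists2 r : R, 0 < r &
     forall s t, x <= s -> s <= m -> m - s < r -> m <= t -> t <= y -> t - m < r ->
     P s -> P t) ->
  P y.
Proof.
move=> xy Px step; pose S := [set s | x <= s /\ s <= y /\ P s].
have Sx : S x by [].
have supS : has_sup S by split; [exists x | exists y => s [_ []]].
set m := sup S; have xm : x <= m := sup_upper_bound supS Sx.
have my : m <= y by apply: ge_sup; [exists x | move=> s [_ []]].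
have [r r0 stepm] := step m xm my.
have [s [xs [sy Ps]] ms] := sup_adherent r0 supS; rewrite -/m in ms.
have sm : s <= m by apply: sup_upper_bound.
have r2r : r / 2 < r by rewrite ltr_pdivrMr // ltr_pMr // ltr1n.
have [ym|my2] := leP y (m + r / 2).
  by apply: stepm Ps => //; lra.
have St : S (m + r / 2).
  split; first by apply: le_trans xm _; rewrite lerDl divr_ge0 // ltW.
  by split; [exact: ltW | apply: stepm Ps => //; lra].
by have := sup_upper_bound supS St; rewrite -/m gerDl leNgt divr_gt0.
Qed.

Section covered_drop.
Context {R : realType}.
Variables (f : R -> R) (U : set R) (e x : R).

Definition covered_drop (s : R) : Prop := exists n (u v : nat -> R),
  [/\ forall i, (i < n)%N -> x <= u i /\ u i <= v i /\ v i <= s,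
      forall i j, (i < j)%N -> (j < n)%N -> v i <= u j,
      forall i, (i < n)%N -> `]u i, v i] `<=` U &
      f x - e * (s - x) - \sum_(i < n) `|f (v i) - f (u i)| <= f s].

Lemma covered_drop_start : covered_drop x.
Proof.
by exists 0%N, (fun=> 0), (fun=> 0); split => //; rewrite big_ord0 subrr mulr0 !subr0.
Qed.

Lemma covered_drop_slope s t : s <= t -> - (e * (t - s)) <= f t - f s ->
  covered_drop s -> covered_drop t.
Proof.
move=> st slope [n [u [v [uvx sorted inU drop]]]]; exists n, u, v; split => //.
  by move=> i /uvx[xu [uv vs]]; do 2!split => //; exact: le_trans vs st.
have -> : e * (t - x) = e * (s - x) + e * (t - s) by ring.
lra.
Qed.

Lemma covered_drop_cover s t : 0 <= e -> x <= s -> s <= t -> `]s, t] `<=` U ->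
  covered_drop s -> covered_drop t.
Proof.
move=> e0 xs st stU [n [u [v [uvx sorted inU drop]]]].
exists n.+1, (fun i => if i == n then s else u i), (fun i => if i == n then t else v i).
split.
- move=> i; rewrite ltnS leq_eqVlt => /predU1P[->|ilt]; first by rewrite eqxx.
  by rewrite ltn_eqF //; have [xu [uv vs]] := uvx i ilt; do 2!split => //; exact: le_trans vs st.
- move=> i j ij; rewrite ltnS leq_eqVlt => /predU1P[jn|jlt].
    by rewrite jn eqxx ltn_eqF -?jn //; have [_ []] := uvx i (leq_trans ij (eq_leq jn)).
  by rewrite !ltn_eqF ?(ltn_trans ij) //; exact: sorted.
- move=> i; rewrite ltnS leq_eqVlt => /predU1P[->|ilt]; first by rewrite eqxx.
  by rewrite ltn_eqF //; exact: inU.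
rewrite big_ord_recr /= eqxx (eq_bigr (fun i : 'I_n => `|f (v i) - f (u i)|)).
  have : f s - f t <= `|f t - f s| by rewrite distrC ler_norm.
  have : e * (s - x) <= e * (t - x) by rewrite ler_wpM2l // lerB.
  lra.
by move=> i _; rewrite ltn_eqF.
Qed.

End covered_drop.

Section nondecreasing.
Context {R : realType}.
Local Notation mu := (@lebesgue_measure R).

Lemma covered_drop_derive1_ge0 (f : R -> R) (N U : set R) (e x y : R) :
  0 < e -> x <= y -> open U -> N `<=` U ->
  (forall t, x <= t -> t <= y -> ~ N t -> derivable f t 1 /\ 0 <= derive1 f t) ->
  covered_drop f U e x y.
Proof.
move=> e0 xy oU NU fd.
apply: real_induction xy (covered_drop_start _ _ _ _) _ => m xm my.
have [Nm|Nm] := pselect (N m).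
  have /nbhs_ballP[r r0 ballU] : nbhs m U by apply: open_nbhs_nbhs; split => //; exact: NU.
  exists r => // s t xs sm ms mt _ tm.
  apply: covered_drop_cover (ltW e0) xs (le_trans sm mt) _.
  move=> z /=; rewrite in_itv /= => /andP[sz zt]; apply: ballU.
  by rewrite /ball /= ltr_norml; apply/andP; split; lra.
have [df f'0] := fd m xm my Nm.
have [r r0 straddle] := straddle_derive1_ge0 df f'0 e0.
exists r => // s t _ sm ms mt _ tm.
by apply: covered_drop_slope; [exact: le_trans sm mt | exact: straddle].
Qed.

Lemma abs_cont_on_nondecreasing (a b : R) (f : R -> R) :
  abs_cont_on a b f ->
  {ae mu, forall t, t \in `[a, b] -> derivable f t 1 /\ 0 <= derive1 f t} ->
  forall x y, a <= x -> x <= y -> y <= b -> f x <= f y.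
Proof.
move=> acf [N [mN N0 notN]] x y ax xy yb.
have fd t : x <= t -> t <= y -> ~ N t -> derivable f t 1 /\ 0 <= derive1 f t.
  move=> xt ty /(contra_not (@notN t))/contrapT; apply.
  by rewrite in_itv /= (le_trans ax xt) (le_trans ty yb).
suff slack e : 0 < e -> f x <= f y + e * (y - x + 1).
  apply/ler_addgt0Pr => eps eps0; have yx1 : 0 < y - x + 1 by lra.
  by have := slack _ (divr_gt0 eps0 yx1); rewrite divfK ?gt_eqF.
move=> e0; have [d d0 acd] := acf e e0.
have Nfin : (mu N < +oo)%E by rewrite N0 ltry.
have [U [oU NU UN]] := lebesgue_regularity_outer mN Nfin d0.
have mU : measurable U by exact: open_measurable.
have muU : (mu U < d%:E)%E.
  by rewrite -(setDKU NU) measureU0 //; exact: measurableD.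
have [n [u [v [uvx sorted inU drop]]]] := covered_drop_derive1_ge0 e0 xy oU NU fd.
have : \sum_(i < n) (v i - u i) < d.
  rewrite -lte_fin; apply: le_lt_trans muU; apply: sum_itv_length_le_measure => //.
  by move=> i /uvx[_ []].
move=> /(acd n u v _ sorted) variation.
have {variation} : \sum_(i < n) `|f (v i) - f (u i)| < e.
  apply: variation => i /uvx[xu [uv vy]].
  by split; [exact: le_trans ax xu | split; [| exact: le_trans vy yb]].
lra.
Qed.

Lemma abs_cont_on_integral_le (a b M : R) (f g : R -> R) :
  a <= b -> abs_cont_on a b f -> measurable_fun `[a, b] g ->
  (forall t, a <= t -> t <= b -> `|g t| <= M) ->
  {ae mu, forall t, t \in `[a, b] -> derivable f t 1 /\ g t <= derive1 f t} ->
  f a + \int[mu]_(t in `[a, b]) g t <= f b.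
Proof.
move=> ab acf mg gM f'g.
have mab : measurable [set` `[a, b]] by exact: measurable_itv.
have ig : mu.-integrable `[a, b] (EFin \o g).
  apply: measurable_bounded_integrable => //.
    exact/compact_finite_measure/segment_compact.
  exists M; split => [|N MN t /=]; first exact: num_real.
  by rewrite in_itv /= => /andP[ta tb]; exact: le_trans (gM _ ta tb) (ltW MN).
pose h := g \_ [set` `[a, b]].
have hE t : a <= t -> t <= b -> h t = g t.
  by move=> ta tb; rewrite /h patchE mem_set //= in_itv /= ta tb.
have ih y : mu.-integrable [set` Interval (BLeft a) (BRight y)] (EFin \o h).
  rewrite /h -restrict_EFin; apply/integrable_restrict => //.
  by apply: integrableS ig => //; exact: measurableI.
pose G x := \int[mu]_(t in [set` Interval (BLeft a) (BRight x)]) h t.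
have G'h := FTC1 ih (integrable_locally mab ig).
have lipG u v : a <= u -> u <= v -> v <= b -> `|G v - G u| <= M * (v - u).
  move=> au uv vb; rewrite /G Rintegral_itvB ?bnd_simp //.
  have iuv : mu.-integrable `]u, v] (EFin \o h).
    apply: integrableS (ih v) => // z /=; rewrite !in_itv /= => /andP[uz ->].
    by rewrite (le_trans au (ltW uz)).
  have M0 : 0 <= M by apply: le_trans (gM a (lexx a) ab).
  rewrite -lee_fin EFin_normr_Rintegral // EFinM -lebesgue_measure_itv_oc //.
  apply: le_trans (le_abse_integral _ _ (measurable_int _ iuv)) _ => //.
  apply: integral_le_bound => //; first exact: measurable_int iuv.
  apply: aeW => z /=; rewrite in_itv /= lee_fin => /andP[uz zv].
  have az : a <= z by lra.
  have zb : z <= b by lra.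
  by rewrite hE // gM.
have f'G : {ae mu, forall t, t \in `[a, b] ->
    derivable (f \- G) t 1 /\ 0 <= derive1 (f \- G) t}.
  (* FTC1 only gives the derivative of G at the points t > a. *)
  have neq_a : {ae mu, forall t, t != a}.
    by exists [set a]; split => // [|t /= /negP/negbNE/eqP //]; exact: lebesgue_measure_set1.
  apply: (filterS3 (ae_filter_ringOfSetsType mu) _ f'g G'h neq_a) => t f't G't ta tab.
  have [df gf'] := f't tab; move: tab; rewrite in_itv /= => /andP[at' tb].
  have a_t : (a < t)%R by rewrite lt_neqAle eq_sym ta.
  have [dG G't'] := G't a_t.
  split; first exact: derivableB.
  by rewrite derive1E deriveB // -!derive1E G't' hE // subr_ge0.
have Ga : G a = 0 by rewrite /G set_itv1 Rintegral_set1.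
have Gb : G b = \int[mu]_(t in `[a, b]) g t.
  by apply: eq_Rintegral => t; rewrite inE /= in_itv /= => /andP[ta tb]; exact: hE.
have acfG := abs_cont_onB acf (lipschitz_abs_cont_on lipG).
have := abs_cont_on_nondecreasing acfG f'G (lexx a) ab (lexx b).
by rewrite /= Ga Gb subr0; lra.
Qed.

End nondecreasing.

Section clamp01.
Context {R : realType}.
Implicit Types x w : R.

Definition clamp01 x : R := Num.min 1 (Num.max 0 x).

Lemma clamp01_ge0 x : 0 <= clamp01 x.
Proof. by rewrite le_min ler01 le_max lexx. Qed.

Lemma clamp01_le1 x : clamp01 x <= 1.
Proof. by rewrite ge_min lexx. Qed.

Lemma clamp01_le_norm x : clamp01 x <= `|x|.
Proof. by rewrite ge_min ge_max normr_ge0 ler_norm orbT. Qed.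

Lemma clamp01_gt0 x : (0 < clamp01 x) = (0 < x).
Proof. by rewrite lt_min ltr01 lt_max ltxx. Qed.

Lemma clamp01_le_cos2_add_mul_sin2 w (t : R) :
  0 <= w -> clamp01 w <= cos t ^+ 2 + w * sin t ^+ 2.
Proof.
move=> w0; have c2 := sqr_ge0 (cos t); have s2 := sqr_ge0 (sin t).
have cs := cos2Dsin2 t; rewrite /clamp01 ge_min (max_idPr w0).
by apply/orP; have [w1|w1] := leP w 1; [right | left]; nra.
Qed.

End clamp01.

Section clamp01_integral.
Context d (T : measurableType d) (R : realType) (mu : {measure set T -> \bar R}).
Implicit Types (D : set T) (w : T -> R).

Lemma measurable_fun_clamp01 D w :
  measurable_fun D w -> measurable_fun D (clamp01 \o w).
Proof.
move=> mw; apply: measurable_minr; first exact: measurable_cst.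
by apply: measurable_maxr => //; exact: measurable_cst.
Qed.

Lemma integrable_clamp01 D w : measurable D ->
  mu.-integrable D (EFin \o w) -> mu.-integrable D (EFin \o (clamp01 \o w)).
Proof.
move=> mD iw; have mw := measurable_int _ iw.
apply: le_integrable iw => //; first exact/measurable_EFinP/measurable_fun_clamp01/measurable_EFinP.
by move=> x _; rewrite /= lee_fin ger0_norm ?clamp01_ge0 // clamp01_le_norm.
Qed.

Lemma Rintegral_clamp01_gt0 D w : measurable D ->
  mu.-integrable D (EFin \o w) -> {ae mu, forall x, D x -> 0 <= w x} ->
  (0 < \int[mu]_(x in D) (w x)%:E)%E -> 0 < \int[mu]_(x in D) clamp01 (w x).
Proof.
move=> mD iw w0 wpos.
have ic := integrable_clamp01 mD iw.
rewrite lt_def Rintegral_ge0 ?andbT => [|x _]; last exact: clamp01_ge0.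
apply: contraTneq wpos => c0; rewrite -leNgt.
have : (\int[mu]_(x in D) `|(clamp01 (w x))%:E| = 0)%E.
  have /eqP := EFin_normr_Rintegral mD ic; rewrite c0 normr0 eq_sym abse_eq0 => /eqP <-.
  by apply: eq_integral => x _; rewrite /= ger0_norm // clamp01_ge0.
move=> /(ae_eq_integral_abs mu mD (measurable_int _ ic)) c_ae0.
have w_ae0 : ae_eq mu D (EFin \o w) (cst 0%E).
  apply: (filterS2 (ae_filter_ringOfSetsType mu) _ w0 c_ae0) => x wx0 cx0 Dx.
  apply/eqP; rewrite /= eqe eq_le wx0 ?andbT // leNgt -clamp01_gt0.
  by have /= [->] := cx0 Dx; rewrite ltxx.
by rewrite (ae_eq_integral (cst 0%E) _ mD (measurable_int _ iw)) ?integral0.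
Qed.

End clamp01_integral.

Lemma sqrtr_mulr_cvgy {R : realType} (c : R) :
  0 < c -> (fun x => Num.sqrt x * c) @ +oo --> +oo.
Proof.
move=> c0; apply/cvgryPge => A; near=> x.
rewrite -ler_pdivrMr // (le_trans (ler_norm _)) // -sqrtr_sqr ler_sqrt.
- by near: x; exact: nbhs_pinfty_ge (num_real _).
- by near: x; exact: nbhs_pinfty_ge (num_real _).
Unshelve. all: by end_near. Qed.

Lemma theta0_ge0 {R : realType} (c1 c2 lam : R) : 0 <= theta0 c1 c2 lam.
Proof.
rewrite /theta0; case: ifPn => _; first by rewrite divr_ge0 ?pi_ge0.
case: ifPn => [|]; last by rewrite -leNgt.
by have := atan_gtNpi2 (Num.sqrt lam * c1 / c2); have := pi_gt0 R; lra.
Qed.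

Section pruefer_angle.
Context {R : realType}.
Local Notation mu := (@lebesgue_measure R).
Variable omega : R -> R.
Hypothesis omega_ge0 : {ae mu, forall x, x \in `[0, 1] -> 0 <= omega x}.

Definition pruefer_ode (s : R) (f : R -> R) : Prop :=
  {ae mu, forall x, x \in `[0, 1] ->
     derivable f x 1 /\ derive1 f x = s * (cos (f x) ^+ 2 + omega x * sin (f x) ^+ 2)}.

Lemma pruefer_nondecreasing (s : R) (f : R -> R) :
  0 <= s -> abs_cont_on 0 1 f -> pruefer_ode s f ->
  forall x y, 0 <= x -> x <= y -> y <= 1 -> f x <= f y.
Proof.
move=> s0 acf f'; apply: abs_cont_on_nondecreasing acf _.
apply: (filterS2 (ae_filter_ringOfSetsType mu) _ omega_ge0 f') => t wt f't t01.
have [dt ->] := f't t01; split => //.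
by rewrite mulr_ge0 // addr_ge0 ?sqr_ge0 // mulr_ge0 ?sqr_ge0 ?wt.
Qed.

Hypothesis omega_int : mu.-integrable `[0, 1] (EFin \o omega).

Lemma pruefer_increment_ge (s : R) (f : R -> R) :
  0 <= s -> abs_cont_on 0 1 f -> pruefer_ode s f ->
  f 0 + s * \int[mu]_(x in `[0, 1]) clamp01 (omega x) <= f 1.
Proof.
move=> s0 acf f'.
have m01 : measurable (`[0, 1] : set R) by exact: measurable_itv.
have mc : measurable_fun (`[0, 1] : set R) (fun t => s * clamp01 (omega t)).
  apply/measurable_funM/measurable_fun_clamp01; first exact: measurable_cst.
  by apply/measurable_EFinP; exact: measurable_int omega_int.
have bound t : 0 <= t -> t <= 1 -> `|s * clamp01 (omega t)| <= s.
  move=> _ _; rewrite normrM !ger0_norm ?clamp01_ge0 //.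
  by rewrite ler_piMr ?clamp01_le1.
have lower : {ae mu, forall t, t \in `[0, 1] ->
    derivable f t 1 /\ s * clamp01 (omega t) <= derive1 f t}.
  apply: (filterS2 (ae_filter_ringOfSetsType mu) _ omega_ge0 f') => t wt f't t01.
  have [dt ->] := f't t01; split => //.
  by rewrite ler_wpM2l ?clamp01_le_cos2_add_mul_sin2 ?wt.
have := abs_cont_on_integral_le ler01 acf mc bound lower.
by rewrite RintegralZl //; exact: integrable_clamp01.
Qed.

End pruefer_angle.

Unset Implicit Arguments.

Theorem lemma3p1 (R : realType) (omega : R -> R) (c1 c2 : R)
  (theta : R -> R -> R) (* theta lam x = theta(x; lambda) *) :
  (lebesgue_measure : measure _ R).-integrable `[0%R, 1%R] (EFin \o omega) ->
  {ae (lebesgue_measure : measure _ R), forall x, x \in `[0, 1] -> 0 <= omega x} ->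
  (0%E < \int[(lebesgue_measure : measure _ R)]_(x in `[0%R, 1%R]) (omega x)%:E)%E ->
  0 <= c1 -> (c1 != 0) || (c2 != 0) ->
  (forall lam : R, 0 <= lam ->
     [/\ abs_cont_on 0 1 (theta lam),
         {ae (lebesgue_measure : measure _ R), forall x, x \in `[0, 1] ->
            derivable (theta lam) x 1 /\
            derive1 (theta lam) x =
              Num.sqrt lam * (cos (theta lam x) ^+ 2
                              + omega x * sin (theta lam x) ^+ 2)}
       & theta lam 0 = theta0 c1 c2 lam]) ->
  (theta^~ 1 @ +oo --> +oo) /\
  (forall lam : R, 0 <= lam -> forall x y : R,
     0 <= x -> x <= y -> y <= 1 -> theta lam x <= theta lam y).
Proof.
move=> iw w0 wpos _ _ sol.
split=> [|lam lam0]; last first.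
  by have [acf th' _] := sol lam lam0; exact: pruefer_nondecreasing (sqrtr_ge0 lam) acf th'.
have c0 : 0 < \int[lebesgue_measure]_(x in `[0, 1]) clamp01 (omega x).
  by apply: Rintegral_clamp01_gt0 iw w0 wpos; exact: measurable_itv.
apply: ger_cvgy (sqrtr_mulr_cvgy c0); near=> lam.
have lam0 : 0 <= lam by near: lam; exact: nbhs_pinfty_ge (num_real _).
have [acf th' th0] := sol lam lam0.
apply: le_trans (pruefer_increment_ge w0 iw (sqrtr_ge0 lam) acf th').
by rewrite th0 lerDr theta0_ge0.
Unshelve. all: by end_near. Qed.
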